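(* In the quality-unaware crowdsensing role selection game described in the context (with $w=1$), on the regime $[0,\Phi_0]$, where $\Phi_0=1-\eta s-p-(1-\eta)$, the function $\Lambda(\Phi)$ is either monotonically increasing in $\Phi$, or first decreasing and then increasing in $\Phi$ (i.e., there is $\Phi'\in[0,\Phi_0]$ such that $\Lambda$ is decreasing on $[0,\Phi']$ and increasing on $[\Phi',\Phi_0]$).
   Context: Users form a continuum; a user's type is $(v,c)\in[0,1]^2$, distributed uniformly on $[0,1]^2$. Parameters: weight $w=1$, $s\ge0$, $\eta\in[0,1]$, $p\ge0$. Each user chooses a role in $\{\mathrm S,\mathrm R,\mathrm A\}$. Given a number $\Phi$, payoffs are $\pi_{vc}(\mathrm{S})=v-c+\Phi$, $\pi_{vc}(\mathrm{R})=\eta(v-s)-p$, $\pi_{vc}(\mathrm{A})=0$, and a requester pays $\beta_{vc}=(1-\eta)(v-s)+p$. Define $\widetilde{S}^{\mathrm S}(\Phi)=\{(v,c)\in[0,1]^2:\pi_{vc}(\mathrm S)>\pi_{vc}(\mathrm R),\pi_{vc}(\mathrm S)>\pi_{vc}(\mathrm A)\}$, $\widetilde{S}^{\mathrm R}(\Phi)=\{(v,c)\in[0,1]^2:\pi_{vc}(\mathrm R)>\pi_{vc}(\mathrm S),\pi_{vc}(\mathrm R)>\pi_{vc}(\mathrm A)\}$, $N^{se}(\Phi)=\iint_{\widetilde{S}^{\mathrm S}(\Phi)}\mathrm dv\,\mathrm dc$, $B^{se}(\Phi)=\iint_{\widetilde{S}^{\mathrm R}(\Phi)}[(1-\eta)(v-s)+p]\,\mathrm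 dv\,\mathrm dc$, and $\Lambda(\Phi)=\Phi N^{se}(\Phi)-B^{se}(\Phi)$ (on $[0,\Phi_0]$ this is the function the paper denotes $\Lambda_l$). *)

From Stdlib Require Import Reals.
From Coquelicot Require Import Coquelicot.
Open Scope R_scope.

(* Payoffs of a user of type (v,c), with weight w = 1. *)
Definition pi_S (Phi v c : R) : R := v - c + Phi.
Definition pi_R (eta s p v : R) : R := eta * (v - s) - p.
Definition pi_A : R := 0.

Definition beta_pay (eta s p v : R) : R := (1 - eta) * (v - s) + p.

(* Indicator of the strict-preference region S~^S(Phi) (restricted to [0,1]^2
   via the integration bounds below). *)
Definition ind_S (eta s p Phi v c : R) : R :=
  if Rlt_dec (pi_R eta s p v) (pi_S Phi v c) then
    if Rlt_dec pi_A (pi_S Phi v c) then 1 else 0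
  else 0.

Definition ind_R (eta s p Phi v c : R) : R :=
  if Rlt_dec (pi_S Phi v c) (pi_R eta s p v) then
    if Rlt_dec pi_A (pi_R eta s p v) then 1 else 0
  else 0.

Definition N_se (eta s p Phi : R) : R :=
  RInt (fun c => RInt (fun v => ind_S eta s p Phi v c) 0 1) 0 1.

Definition B_se (eta s p Phi : R) : R :=
  RInt (fun c => RInt (fun v => ind_R eta s p Phi v c * beta_pay eta s p v) 0 1) 0 1.

Definition Lambda (eta s p Phi : R) : R := Phi * N_se eta s p Phi - B_se eta s p Phi.

Definition Phi0 (eta s p : R) : R := 1 - eta * s - p - (1 - eta).

(* Raising Phi only moves users into the sensing role: N^se is nondecreasing in Phi
   and positive for Phi > 0, while B^se is nonincreasing. Hence
   Lambda(y) - Lambda(x) >= (y - x) N^se(y) > 0 whenever 0 <= x < y, so Lambda is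
   strictly increasing on [0, +oo) and the first alternative always holds.
   The inner and outer integrands are monotone (or differences of monotone
   functions) in each variable, and a monotone function is Riemann integrable as a
   uniform limit of finite sums of monotone 0/1 steps. *)

From Stdlib Require Import Reals Lra.
From Coquelicot Require Import Coquelicot.
Open Scope R_scope.

Definition nondecreasing_on (f : R -> R) (a b : R) : Prop :=
  forall x y, a <= x -> x <= y -> y <= b -> f x <= f y.

Definition nonincreasing_on (f : R -> R) (a b : R) : Prop :=
  forall x y, a <= x -> x <= y -> y <= b -> f y <= f x.

Lemma ex_RInt_const_on (f : R -> R) (a b c : R) : a <= b ->
  (forall x, a < x < b -> f x = c) -> ex_RInt f a b.
Proof.
intros hab hf. apply ex_RInt_ext with (fun _ => c); [|apply ex_RInt_const].
intros x hx. rewrite Rmin_left, Rmax_right in hx by lra. symmetry. auto.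
Qed.

Lemma RInt_one (a b : R) : RInt (fun _ => 1) a b = b - a.
Proof. rewrite RInt_const. unfold scal; simpl; unfold mult; simpl. ring. Qed.

(* The jump happens at the supremum of the zero set of [g], enlarged by [a] so as to be nonempty. *)
Lemma ex_RInt_nondecreasing_01 (g : R -> R) (a b : R) : a <= b ->
  (forall x, g x = 0 \/ g x = 1) -> nondecreasing_on g a b -> ex_RInt g a b.
Proof.
intros hab h01 hg.
set (E := fun x => x = a \/ (a <= x <= b /\ g x = 0)).
destruct (completeness E) as [t [ht_ub ht_lub]].
- exists b. intros x [->|[hx _]]; lra.
- exists a. now left.
- assert (hat : a <= t) by (apply ht_ub; now left).
  assert (htb : t <= b) by (apply ht_lub; intros x [->|[hx _]]; lra).
  apply ex_RInt_Chasles with t;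
    [apply (ex_RInt_const_on _ _ _ 0 hat) | apply (ex_RInt_const_on _ _ _ 1 htb)].
  + intros x hx. destruct (h01 x) as [|hx1]; [easy|]. exfalso.
    enough (t <= x) by lra. apply ht_lub. intros y [->|[hy hy0]]; [lra|].
    destruct (Rle_dec y x) as [|hyx]; [easy|].
    pose proof (hg x y ltac:(lra) ltac:(lra) ltac:(lra)). lra.
  + intros x hx. destruct (h01 x) as [hx0|]; [|easy].
    enough (x <= t) by lra. apply ht_ub. right. split; [lra|easy].
Qed.

Lemma ex_RInt_uniform_limit (f : R -> R) (g : nat -> R -> R) (a b : R) :
  (forall n, ex_RInt (g n) a b) ->
  (forall eps : posreal, exists N, forall n t, (N <= n)%nat -> Rabs (g n t - f t) < eps) ->
  ex_RInt f a b.
Proof.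
intros hg hconv.
destruct (filterlim_RInt (V := R_CompleteNormedModule) g a b eventually eventually_filter
            f (fun n => RInt (g n) a b)) as [If [_ hIf]].
- intro n. apply RInt_correct, hg.
- intros P [eps hP]. destruct (hconv eps) as [N hN].
  exists N. intros n hn. apply hP. intro t. apply (hN n t hn).
- now exists If.
Qed.

Definition step_at (h y : R) : R := if Rle_dec h y then 1 else 0.

Definition levels_below (m d y : R) (n : nat) : R :=
  sum_f_R0 (fun k => step_at (m + INR (S k) * d) y) n.

Lemma levels_below_spec (m d y : R) (n : nat) : 0 <= d -> m <= y ->
  let c := levels_below m d y n in
  0 <= c <= INR (S n) /\ m + d * c <= y /\ (c = INR (S n) \/ y < m + d * (c + 1)).
Proof.
intros hd hy. induction n as [|n IH]; cbn zeta in *.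
- unfold levels_below, step_at; simpl. destruct Rle_dec; lra.
- unfold levels_below in *; rewrite tech5.
  set (c := sum_f_R0 _ n) in *. rewrite !S_INR in *.
  unfold step_at; destruct Rle_dec; nra.
Qed.

Lemma levels_below_approx (m d y : R) (n : nat) : 0 <= d ->
  m <= y <= m + INR (S n) * d -> Rabs (m + d * levels_below m d y n - y) <= d.
Proof.
intros hd hy. destruct (levels_below_spec m d y n hd (proj1 hy)) as [_ [hle [heq|hlt]]];
  apply Rabs_le; [rewrite heq in *|]; nra.
Qed.

Lemma ex_RInt_step_at (f : R -> R) (h a b : R) : a <= b ->
  nondecreasing_on f a b -> ex_RInt (fun x => step_at h (f x)) a b.
Proof.
intros hab hf. apply ex_RInt_nondecreasing_01; [easy| |].
- intro x. unfold step_at. destruct Rle_dec; auto.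
- intros x y hx hxy hy. specialize (hf x y hx hxy hy).
  unfold step_at. do 2 destruct Rle_dec; lra.
Qed.

Lemma ex_RInt_levels_below (f : R -> R) (m d a b : R) (n : nat) : a <= b ->
  nondecreasing_on f a b -> ex_RInt (fun x => levels_below m d (f x) n) a b.
Proof.
intros hab hf. unfold levels_below. induction n as [|n IH].
- now apply ex_RInt_step_at.
- apply (ex_RInt_plus (V := R_NormedModule)); [exact IH|]. now apply ex_RInt_step_at.
Qed.

Lemma ex_RInt_nondecreasing_bounded (f : R -> R) (m M a b : R) : a <= b ->
  (forall x, m <= f x <= M) -> nondecreasing_on f a b -> ex_RInt f a b.
Proof.
intros hab hbound hf.
assert (hmM : m <= M) by (specialize (hbound 0); lra).
set (d n := (M - m) / INR (S n)).
assert (hSn : forall n, 0 < INR (S n)) by (intro; apply lt_0_INR, Nat.lt_0_succ).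
assert (hd : forall n, 0 <= d n) by (intro; apply Rdiv_le_0_compat; [lra|auto]).
assert (hdS : forall n, INR (S n) * d n = M - m) by (intro; unfold d; field; apply Rgt_not_eq, hSn).
apply ex_RInt_uniform_limit with (fun n x => m + d n * levels_below m (d n) (f x) n).
- intro n. apply (ex_RInt_plus (V := R_NormedModule) (fun _ => m)); [apply ex_RInt_const|].
  apply (ex_RInt_scal (V := R_NormedModule)). now apply ex_RInt_levels_below.
- intros [eps heps]. destruct (INR_unbounded ((M - m) / eps)) as [N hN]. exists N.
  intros n t hn. simpl.
  apply Rle_lt_trans with (d n).
  + apply levels_below_approx; [auto|]. rewrite hdS. specialize (hbound t). lra.
  + apply Rlt_div_l in hN; [|easy].
    assert (INR N <= INR n) by now apply le_INR.
    unfold d. apply Rlt_div_l; [apply hSn|]. rewrite S_INR. nra.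
Qed.

Lemma ex_RInt_nondecreasing (f : R -> R) (a b : R) : a <= b ->
  nondecreasing_on f a b -> ex_RInt f a b.
Proof.
intros hab hf.
set (clamp x := Rmax a (Rmin b x)).
assert (hclamp : forall x, a <= clamp x <= b).
{ intro x. split; [apply Rmax_l|]. apply Rmax_lub; [easy|apply Rmin_l]. }
apply ex_RInt_ext with (fun x => f (clamp x)).
- intros x hx. rewrite Rmin_left, Rmax_right in hx by lra.
  unfold clamp. now rewrite Rmin_right, Rmax_right by lra.
- apply ex_RInt_nondecreasing_bounded with (f a) (f b); [easy| |].
  + intro x. specialize (hclamp x). split; apply hf; lra.
  + intros x y hx hxy hy. apply hf; try apply hclamp.
    apply Rle_max_compat_l, Rle_min_compat_l, hxy.
Qed.

Lemma ex_RInt_nonincreasing (f : R -> R) (a b : R) : a <= b ->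
  nonincreasing_on f a b -> ex_RInt f a b.
Proof.
intros hab hf. apply ex_RInt_ext with (fun x => opp (- f x)).
- intros x _. unfold opp; simpl. ring.
- apply (ex_RInt_opp (V := R_NormedModule)), ex_RInt_nondecreasing; [easy|].
  intros x y hx hxy hy. specialize (hf x y hx hxy hy). lra.
Qed.

Section RoleSelection.

Variables s eta p : R.
Hypotheses (hs : 0 <= s) (heta : 0 <= eta <= 1) (hp : 0 <= p).

Ltac unfold_payoffs :=
  unfold ind_S, ind_R, beta_pay, pi_S, pi_R, pi_A in *; repeat destruct Rlt_dec.

Lemma ind_S_ge0 Phi v c : 0 <= ind_S eta s p Phi v c.
Proof. unfold_payoffs; lra. Qed.

Lemma ind_S_nondecreasing_v Phi c v1 v2 : v1 <= v2 ->
  ind_S eta s p Phi v1 c <= ind_S eta s p Phi v2 c.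
Proof. intros. unfold_payoffs; nra. Qed.

Lemma ind_S_le Phi1 Phi2 c1 c2 v : Phi1 - c1 <= Phi2 - c2 ->
  ind_S eta s p Phi1 v c1 <= ind_S eta s p Phi2 v c2.
Proof. intros. unfold_payoffs; lra. Qed.

Lemma beta_pay_ge0 v : pi_A < pi_R eta s p v -> 0 <= beta_pay eta s p v.
Proof. unfold_payoffs. intros hpos. assert (s < v) by nra. nra. Qed.

Definition requester_pay (v : R) : R :=
  if Rlt_dec pi_A (pi_R eta s p v) then beta_pay eta s p v else 0.

Definition forgone_pay (Phi c v : R) : R :=
  if Rlt_dec (pi_S Phi v c) (pi_R eta s p v) then 0 else requester_pay v.

(* The requester's payment is not monotone in [v], but it is a difference of nondecreasing functions. *)
Lemma ind_R_pay_split Phi v c :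
  ind_R eta s p Phi v c * beta_pay eta s p v = requester_pay v - forgone_pay Phi c v.
Proof. unfold forgone_pay, requester_pay, ind_R. repeat destruct Rlt_dec; lra. Qed.

Lemma requester_pay_ge0 v : 0 <= requester_pay v.
Proof.
unfold requester_pay. destruct Rlt_dec as [h|]; [now apply beta_pay_ge0|lra].
Qed.

Lemma requester_pay_nondecreasing v1 v2 : v1 <= v2 -> requester_pay v1 <= requester_pay v2.
Proof.
intros hv. pose proof (beta_pay_ge0 v2). unfold requester_pay in *. unfold_payoffs; nra.
Qed.

Lemma forgone_pay_nondecreasing Phi c v1 v2 : v1 <= v2 ->
  forgone_pay Phi c v1 <= forgone_pay Phi c v2.
Proof.
intros hv. pose proof (requester_pay_nondecreasing v1 v2 hv).
pose proof (requester_pay_ge0 v1). pose proof (requester_pay_ge0 v2).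
unfold forgone_pay. unfold pi_S, pi_R in *. repeat destruct Rlt_dec; nra.
Qed.

Lemma ind_R_pay_le Phi1 Phi2 c1 c2 v : Phi2 - c2 <= Phi1 - c1 ->
  ind_R eta s p Phi1 v c1 * beta_pay eta s p v <= ind_R eta s p Phi2 v c2 * beta_pay eta s p v.
Proof. intros. pose proof (beta_pay_ge0 v). unfold_payoffs; nra. Qed.


Definition N_row (Phi c : R) : R := RInt (fun v => ind_S eta s p Phi v c) 0 1.

Definition B_row (Phi c : R) : R :=
  RInt (fun v => ind_R eta s p Phi v c * beta_pay eta s p v) 0 1.

Lemma ex_RInt_ind_S Phi c : ex_RInt (fun v => ind_S eta s p Phi v c) 0 1.
Proof.
apply ex_RInt_nondecreasing; [lra|]. intros v1 v2 _ hv _. now apply ind_S_nondecreasing_v.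
Qed.

Lemma ex_RInt_ind_R_pay Phi c :
  ex_RInt (fun v => ind_R eta s p Phi v c * beta_pay eta s p v) 0 1.
Proof.
apply ex_RInt_ext with (fun v => minus (requester_pay v) (forgone_pay Phi c v)).
- intros v _. now rewrite ind_R_pay_split.
- apply (ex_RInt_minus (V := R_NormedModule)); apply ex_RInt_nondecreasing; try lra;
    intros v1 v2 _ hv _.
  + now apply requester_pay_nondecreasing.
  + now apply forgone_pay_nondecreasing.
Qed.

Lemma N_row_le Phi1 Phi2 c1 c2 : Phi1 - c1 <= Phi2 - c2 -> N_row Phi1 c1 <= N_row Phi2 c2.
Proof.
intros. apply RInt_le; try lra; try apply ex_RInt_ind_S. intros; now apply ind_S_le.
Qed.

Lemma B_row_le Phi1 Phi2 c1 c2 : Phi2 - c2 <= Phi1 - c1 -> B_row Phi1 c1 <= B_row Phi2 c2.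
Proof.
intros. apply RInt_le; try lra; try apply ex_RInt_ind_R_pay. intros; now apply ind_R_pay_le.
Qed.

Lemma ex_RInt_N_row Phi : ex_RInt (N_row Phi) 0 1.
Proof.
apply ex_RInt_nonincreasing; [lra|]. intros c1 c2 _ hc _. apply N_row_le. lra.
Qed.

Lemma ex_RInt_B_row Phi : ex_RInt (B_row Phi) 0 1.
Proof.
apply ex_RInt_nondecreasing; [lra|]. intros c1 c2 _ hc _. apply B_row_le. lra.
Qed.

Lemma N_se_le Phi1 Phi2 : Phi1 <= Phi2 -> N_se eta s p Phi1 <= N_se eta s p Phi2.
Proof.
intros. apply RInt_le; try lra; try apply ex_RInt_N_row. intros; apply N_row_le. lra.
Qed.

Lemma B_se_le Phi1 Phi2 : Phi1 <= Phi2 -> B_se eta s p Phi2 <= B_se eta s p Phi1.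
Proof.
intros. apply RInt_le; try lra; try apply ex_RInt_B_row. intros; apply B_row_le. lra.
Qed.

(* Every type with [0 < v < 1] and [0 < c < min Phi 1] strictly prefers sensing. *)
Lemma N_se_gt0 Phi : 0 < Phi -> 0 < N_se eta s p Phi.
Proof.
intros hPhi. set (m := Rmin Phi 1).
assert (0 < m) by (apply Rmin_glb_lt; lra).
assert (m <= 1) by apply Rmin_r.
assert (m <= Phi) by apply Rmin_l.
assert (hrow : forall c, 0 < c < m -> N_row Phi c = 1).
{ intros c hc. unfold N_row.
  transitivity (RInt (fun _ => 1) 0 1); [apply RInt_ext|rewrite RInt_one; lra].   intros v hv. rewrite Rmin_left, Rmax_right in hv by lra. unfold_payoffs; nra. }
assert (hhead : RInt (N_row Phi) 0 m = m).
{ transitivity (RInt (fun _ => 1) 0 m); [apply RInt_ext|rewrite RInt_one; lra].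
  intros c hc. rewrite Rmin_left, Rmax_right in hc by lra. now apply hrow. }
assert (htail : 0 <= RInt (N_row Phi) m 1).
{ apply RInt_ge_0; [easy| |].
  - apply (ex_RInt_Chasles_2 (N_row Phi) 0); [lra|apply ex_RInt_N_row].
  - intros c _. apply RInt_ge_0; [lra|apply ex_RInt_ind_S|]. intros; apply ind_S_ge0. }
change (N_se eta s p Phi) with (RInt (N_row Phi) 0 1).
rewrite <- (RInt_Chasles (N_row Phi) 0 m 1).
- change (plus ?x ?y) with (x + y). lra.
- apply (ex_RInt_Chasles_1 (N_row Phi) _ _ 1); [lra|apply ex_RInt_N_row].
- apply (ex_RInt_Chasles_2 (N_row Phi) 0); [lra|apply ex_RInt_N_row].
Qed.

Lemma Lambda_increasing x y : 0 <= x -> x < y -> Lambda eta s p x < Lambda eta s p y.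
Proof.
intros hx hxy. unfold Lambda.
pose proof (N_se_le x y (Rlt_le _ _ hxy)).
pose proof (B_se_le x y (Rlt_le _ _ hxy)).
pose proof (N_se_gt0 y (Rle_lt_trans _ _ _ hx hxy)).
nra.
Qed.

End RoleSelection.

Theorem lemma2 (s eta p : R) (hs : 0 <= s) (heta : 0 <= eta <= 1) (hp : 0 <= p) :
  (forall x y, 0 <= x -> x < y -> y <= Phi0 eta s p ->
     Lambda eta s p x < Lambda eta s p y)
  \/
  (exists Phi', 0 <= Phi' <= Phi0 eta s p /\
     (forall x y, 0 <= x -> x < y -> y <= Phi' ->
        Lambda eta s p y < Lambda eta s p x) /\
     (forall x y, Phi' <= x -> x < y -> y <= Phi0 eta s p ->
        Lambda eta s p x < Lambda eta s p y)).
Proof.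
left. intros x y hx hxy _. now apply Lambda_increasing.
Qed.
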